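(* Let $y_0\in Y$ satisfy $d^*(y_0)=k^*(y_0)$. - If $V_T(\cdot)$ is continuous on $Y$ for every integer $T>1$, then the limit $\lim_{T\to\infty}V_T(y_0)$ exists and equals $d^*(y_0)$. - If $h_\alpha(\cdot)$ is continuous on $Y$ for every $\alpha\in(0,1)$, then the limit $\lim_{\alpha\uparrow1}h_\alpha(y_0)$ exists and equals $d^*(y_0)$.
   Context: Let $Y\subset\mathbb{R}^m$ be nonempty compact, $U_0$ a compact metric space, $U(\cdot):Y\rightsquigarrow U_0$ upper semicontinuous and compact-valued, and $f:\mathbb{R}^m\times U_0\to\mathbb{R}^m$, $k:\mathbb{R}^m\times U_0\to\mathbb{R}$ continuous. Put $A(y):=\{u\in U(y): f(y,u)\in Y\}$ and $G:=\{(y,u):y\in Y,\ u\in A(y)\}$. Standing assumption: $A(y)\ne\emptyset$ for all $y\in Y$. For $y_0\in Y$, an admissible process on $\{0,\dots,T-1\}$ (respectively on $\{0,1,\dots\}$) is a pair $(y(t),u(t))$ with $y(0)=y_0$, $u(t)\in A(y(t))$ and $y(t+1)=f(y(t),u(t))$. The controls form $\mathcal U_T(y_0)$ (respectively $\mathcal U(y_0)$). Value functions: $$V_T(y_0):=\frac1T\min_{u\in\mathcal U_T(y_0)}\sum_{t=0}^{T-1}k(y(t),u(t)),\qquad h_\alpha(y_0):=(1-\alpha)\min_{u\in\mathcal U(y_0)}\sum_{t=0}^\infty\alpha^tk(y(t),u(t)).$$ LP value: - $\mathcal P(G)$ denotes the Borel probability measures on $G$ and $\mathcal M_+(G)$ the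 finite nonnegative Borel measures on $G$. - $W:=\{\gamma\in\mathcal P(G):\int_G(\varphi(f(y,u))-\varphi(y))\,d\gamma=0\ \forall\varphi\in C(Y)\}$. - $k^*(y_0)$ is the infimum of $\int_Gk\,d\gamma$ over pairs $(\gamma,\xi)\in\mathcal P(G)\times\mathcal M_+(G)$ with $\gamma\in W$ and $\int_G(\varphi(y_0)-\varphi(y))\,d\gamma+\int_G(\varphi(f(y,u))-\varphi(y))\,d\xi=0$ for all $\varphi\in C(Y)$. Dual value: $d^*(y_0):=\sup\mu$, where the supremum is over triples $(\mu,\psi,\eta)\in\mathbb{R}\times C(Y)\times C(Y)$ with, for all $(y,u)\in G$: $$k(y,u)+\psi(y_0)-\psi(y)+\eta(f(y,u))-\eta(y)-\mu\ge0,\qquad\psi(f(y,u))-\psi(y)\ge0.$$ *)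

From HB Require Import structures.
From mathcomp Require Import all_boot all_order all_algebra.
From mathcomp Require Import all_classical all_reals all_analysis.
Set Implicit Arguments. Unset Strict Implicit. Unset Printing Implicit Defensive.
Import Order.TTheory GRing.Theory Num.Theory.
Import numFieldNormedType.Exports.
Local Open Scope classical_set_scope.
Local Open Scope ring_scope.

(* pointed metric spaces (U0 is nonempty under the standing assumptions) *)
#[short(type="pmetricType")]
HB.structure Definition PMetric (K : numDomainType) :=
  { M of Metric K M & isPointed M }.

Section OCP.
Context {R : realType} {m : nat} {U0 : pmetricType R}.

Local Notation Sp := ('rV[R]_m * U0)%type.
Local Notation BorSp := (g_sigma_algebraType (@open Sp)).

Definition usc_on (Y : set 'rV[R]_m) (U : 'rV[R]_m -> set U0) :=
  forall y, Y y -> forall O : set U0, open O -> U y `<=` O ->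
    \forall y' \near y, Y y' -> U y' `<=` O.

Variables (Y : set 'rV[R]_m) (U : 'rV[R]_m -> set U0)
  (f : Sp -> 'rV[R]_m) (k : Sp -> R).

Definition Aset (y : 'rV[R]_m) : set U0 := [set u | U y u /\ Y (f (y, u))].

Definition Gset : set Sp := [set p | Y p.1 /\ Aset p.1 p.2].

Definition admissibleT (T : nat) (y0 : 'rV[R]_m)
    (y : nat -> 'rV[R]_m) (u : nat -> U0) :=
  y 0%N = y0 /\ forall t, (t < T)%N -> Aset (y t) (u t) /\ y t.+1 = f (y t, u t).

Definition admissible (y0 : 'rV[R]_m) (y : nat -> 'rV[R]_m) (u : nat -> U0) :=
  y 0%N = y0 /\ forall t, Aset (y t) (u t) /\ y t.+1 = f (y t, u t).

Definition V (T : nat) (y0 : 'rV[R]_m) : R :=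
  T%:R^-1 * inf [set c | exists y u, admissibleT T y0 y u /\
                         c = \sum_(0 <= t < T) k (y t, u t)].

Definition h (alpha : R) (y0 : 'rV[R]_m) : R :=
  (1 - alpha) * inf [set c | exists y u, admissible y0 y u /\
     c = limn (fun n => \sum_(0 <= t < n) alpha ^+ t * k (y t, u t))].

(* C(Y): functions continuous on Y (only their values on Y matter) *)
Definition contY (phi : 'rV[R]_m -> R) := {within Y, continuous phi}.

(* gamma in P(G): Borel probability measure concentrated on G *)
Definition prob_on_G (g : {measure set BorSp -> \bar R}) :=
  g [set: BorSp] = 1%E /\ g (~` (Gset : set BorSp)) = 0%E.

(* xi in M_+(G): finite nonnegative Borel measure concentrated on G *)
Definition finmeas_on_G (xi : {measure set BorSp -> \bar R}) :=
  (xi [set: BorSp] < +oo)%E /\ xi (~` (Gset : set BorSp)) = 0%E.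

Definition inW (g : {measure set BorSp -> \bar R}) :=
  prob_on_G g /\
  forall phi, contY phi ->
    (\int[g]_(p in (Gset : set BorSp)) (phi (f p) - phi p.1)%:E = 0)%E.

(* feasible pairs of the LP defining k*(y0) *)
Definition LPfeasible (y0 : 'rV[R]_m) (g xi : {measure set BorSp -> \bar R}) :=
  inW g /\ finmeas_on_G xi /\
  forall phi, contY phi ->
    (\int[g]_(p in (Gset : set BorSp)) (phi y0 - phi p.1)%:E
     + \int[xi]_(p in (Gset : set BorSp)) (phi (f p) - phi p.1)%:E = 0)%E.

Definition k_star (y0 : 'rV[R]_m) : \bar R :=
  ereal_inf [set (\int[g]_(p in (Gset : set BorSp)) (k p)%:E)%E |
             g in [set g | exists xi, LPfeasible y0 g xi]].

Definition d_star (y0 : 'rV[R]_m) : \bar R :=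
  ereal_sup [set mu%:E | mu in [set mu : R | exists psi eta,
     contY psi /\ contY eta /\
     forall p, Gset p ->
       0 <= k p + psi y0 - psi p.1 + eta (f p) - eta p.1 - mu /\
       0 <= psi (f p) - psi p.1]].

End OCP.

(* Lower bounds come from weak duality along trajectories: if (mu, psi, eta) is
   dual feasible at y0, then psi is nondecreasing along every admissible
   trajectory from y0, so every stage cost is at least
   mu + eta(y t) - eta(y t.+1), and telescoping gives
   V_T(y0) >= mu - 2 |eta| / T and h_alpha(y0) >= mu - 2 |eta| (1 - alpha).
   Upper bounds come from an LP-feasible pair (gamma, xi): since V_T and h_alpha
   are continuous, the dynamic programming inequalities
   (T+1) V_(T+1)(y) <= k(y,u) + T V_T(f(y,u)) and
   h_alpha(y) <= (1 - alpha) k(y,u) + alpha h_alpha(f(y,u)) can be integrated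
   against the invariant measure gamma, which bounds the gamma-averages of V_T
   and h_alpha by int k dgamma + O(1/T), resp. int k dgamma.  Testing the second
   LP constraint with phi = V_T or phi = h_alpha, and using that
   phi(y) - phi(f(y,u)) is O(1/T), resp. O(1 - alpha), transfers these bounds
   to the values at y0.  As the supremum of the mu equals the infimum of the
   int k dgamma, both values are squeezed to d*(y0). *)

From HB Require Import structures.
From mathcomp Require Import all_boot all_order all_algebra.
From mathcomp Require Import all_classical all_reals all_analysis.
From mathcomp Require Import ring lra.
Set Implicit Arguments. Unset Strict Implicit. Unset Printing Implicit Defensive.
Import Order.TTheory GRing.Theory Num.Theory.
Import numFieldNormedType.Exports.
Local Open Scope classical_set_scope.
Local Open Scope ring_scope.

Lemma compact_continuous_bounded {R : realType} {X : topologicalType} (A : set X)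
    (phi : X -> R) :
  compact A -> {within A, continuous phi} -> exists M, forall x, A x -> `|phi x| <= M.
Proof.
move=> cA /continuous_compact/(_ cA)/compact_bounded[M [_ phiM]].
exists (`|M| + 1) => x Ax; apply: phiM; last by exists x.
by rewrite (le_lt_trans (ler_norm M)) // ltrDl.
Qed.

Lemma bounded_fun_le {R : realType} {T : Type} (D : set T) (F : T -> R) (B : R) :
  (forall x, D x -> `|F x| <= B) -> [bounded F x | x in D].
Proof.
move=> FB; rewrite /bounded_near; near=> M => x Dx; apply: le_trans (FB _ Dx) _.
by near: M; apply: nbhs_pinfty_ge; exact: num_real.
Unshelve. all: by end_near.
Qed.

Lemma measure_setC0 {d} {T : measurableType d} {R : realType}
    (mu : {measure set T -> \bar R}) (A : set T) :
  measurable A -> mu (~` A) = 0%E -> mu A = mu [set: T].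
Proof.
move=> mA muC0; have := measureU mu mA (measurableC mA) (setICr A).
by rewrite setUv => ->; rewrite [X in (_ + X)%E](_ : _ = 0%E) ?adde0.
Qed.

Section IntegrableEFin.
Context {d} {T : measurableType d} {R : realType} (mu : {measure set T -> \bar R}).
Variables (D : set T) (mD : measurable D).

Lemma integrableD_EFin (F H : T -> R) : mu.-integrable D (EFin \o F) ->
  mu.-integrable D (EFin \o H) -> mu.-integrable D (EFin \o (fun x => F x + H x)).
Proof. by move=> iF iH; apply: eq_integrable mD _ _ _ (integrableD mD iF iH) => x _. Qed.

Lemma integrableB_EFin (F H : T -> R) : mu.-integrable D (EFin \o F) ->
  mu.-integrable D (EFin \o H) -> mu.-integrable D (EFin \o (fun x => F x - H x)).
Proof. by move=> iF iH; apply: eq_integrable mD _ _ _ (integrableB mD iF iH) => x _. Qed.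

Lemma integrableZl_EFin c (F : T -> R) : mu.-integrable D (EFin \o F) ->
  mu.-integrable D (EFin \o (fun x => c * F x)).
Proof. by move=> iF; apply: eq_integrable mD _ _ _ (integrableZl mD c iF) => x _. Qed.

End IntegrableEFin.

Lemma sum_telescope_ge {R : realDomainType} (x z : nat -> R) (mu M : R) (T : nat) :
  (forall t, (t <= T)%N -> `|z t| <= M) ->
  (forall t, (t < T)%N -> mu + (z t - z t.+1) <= x t) ->
  T%:R * mu - 2 * M <= \sum_(0 <= t < T) x t.
Proof.
move=> zM hx; apply: le_trans (ler_sum_nat (fun t tT => hx t (andP tT).2)).
rewrite big_split sumr_const_nat subn0 mulr_natl /= lerD2l.
have -> : \sum_(0 <= t < T) (z t - z t.+1) = - (z T - z 0%N).
  by rewrite -telescope_sumr // -sumrN; apply: eq_bigr => t _; rewrite opprB.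
rewrite lerN2 mulr2n mulrDl mul1r.
apply: le_trans (ler_norm _) _; apply: le_trans (ler_normB _ _) _.
by apply: lerD; apply: zM.
Qed.

Section DiscountedSum.
Context {R : realType} (al : R).
Hypotheses (al_ge0 : 0 <= al) (al_lt1 : al < 1).

Definition dpsum (x : nat -> R) n := \sum_(0 <= t < n) al ^+ t * x t.
Definition dsum (x : nat -> R) := limn (dpsum x).

Let al_norm : `|al| < 1. Proof. by rewrite ger0_norm. Qed.

Lemma is_cvg_dpsum x B : (forall t, `|x t| <= B) -> cvgn (dpsum x).
Proof.
move=> xB; have B0 : 0 <= B := le_trans (normr_ge0 _) (xB 0%N).
apply: normed_cvg; apply: (series_le_cvg (v_ := geometric B al)) => t /=.
- exact: normr_ge0.
- by rewrite mulr_ge0 ?exprn_ge0.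
- by rewrite normrM ger0_norm ?exprn_ge0 // mulrC ler_wpM2r ?exprn_ge0.
- exact: is_cvg_geometric_series.
Qed.

Lemma dsum_cst c : dsum (fun=> c) = c / (1 - al).
Proof.
apply: cvg_lim => //; have -> : dpsum (fun=> c) = series (geometric c al).
  by apply/funext => n; apply: eq_bigr => t _; rewrite mulrC.
exact: cvg_geometric_series.
Qed.

Lemma dsumD x y Bx By : (forall t, `|x t| <= Bx) -> (forall t, `|y t| <= By) ->
  dsum (fun t => x t + y t) = dsum x + dsum y.
Proof.
move=> xB yB; apply: cvg_lim => //.
have -> : dpsum (fun t => x t + y t) = dpsum x \+ dpsum y.
  apply/funext => n; rewrite /dpsum /= -big_split.
  by apply: eq_bigr => t _; rewrite mulrDr.
by apply: cvgD; [exact: is_cvg_dpsum xB|exact: is_cvg_dpsum yB].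
Qed.

Lemma dsumS x B : (forall t, `|x t| <= B) ->
  dsum x = x 0%N + al * dsum (fun t => x t.+1).
Proof.
move=> xB; apply: cvg_lim => //; rewrite -cvg_shiftS.
have -> : (fun n => dpsum x n.+1) = (fun n => x 0%N + al * dpsum (fun t => x t.+1) n).
  apply/funext => n; rewrite /dpsum big_nat_recl // expr0 mul1r mulr_sumr.
  by congr (_ + _); apply: eq_bigr => t _; rewrite exprS mulrA.
apply: cvgD; first exact: cvg_cst.
by apply: cvgMr; exact: is_cvg_dpsum (fun t => xB t.+1).
Qed.

Lemma ler_dsum x y Bx By : (forall t, `|x t| <= Bx) -> (forall t, `|y t| <= By) ->
  (forall t, x t <= y t) -> dsum x <= dsum y.
Proof.
move=> xB yB xy; apply: ler_lim; [exact: is_cvg_dpsum xB|exact: is_cvg_dpsum yB|].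
by near=> n; apply: ler_sum => t _; rewrite ler_wpM2l ?exprn_ge0.
Unshelve. all: by end_near.
Qed.

Lemma dsum_telescope_ge x z mu Bx M : (forall t, `|x t| <= Bx) ->
  (forall t, `|z t| <= M) -> (forall t, mu + (z t - z t.+1) <= x t) ->
  mu / (1 - al) - 2 * M <= dsum x.
Proof.
move=> xB zM hx.
have zSM t : `|z t.+1| <= M by [].
have NzSM t : `|- z t.+1| <= M by rewrite normrN.
have dzM t : `|z t - z t.+1| <= M + M := le_trans (ler_normB _ _) (lerD (zM _) (zM _)).
have zS_le : dsum (fun t => z t.+1) <= M / (1 - al).
  rewrite -dsum_cst; apply: (ler_dsum zSM (Bx := M) (By := `|M|)) => t //.
  exact: le_trans (ler_norm _) (zM _).
apply: le_trans (ler_dsum (Bx := `|mu| + (M + M)) _ xB hx); last first.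
  by move=> t; apply: le_trans (ler_normD _ _) _; rewrite lerD2l.
rewrite (dsumD (Bx := `|mu|) (By := M + M)) // dsum_cst lerD2l.
rewrite (dsumD zM NzSM) (dsumS zM).
have -> : dsum (fun t => - z t.+1) = - dsum (fun t => z t.+1).
  apply: cvg_lim => //; rewrite (_ : dpsum _ = fun n => - dpsum (fun t => z t.+1) n).
    by apply: cvgN; exact: is_cvg_dpsum zSM.
  by apply/funext => n; rewrite /dpsum -sumrN; apply: eq_bigr => t _; rewrite mulrN.
have z0M := zM 0%N; rewrite ler_norml in z0M; case/andP: z0M => z0M _.
have a1 : 0 < 1 - al by rewrite subr_gt0.
rewrite ler_pdivlMr // in zS_le.
nra.
Qed.

End DiscountedSum.

Lemma cvge_sup_inf_sandwich {R : realType} {T : Type} (F : set_system T)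
    {FF : ProperFilter F} (x : T -> R) (L : set R) (H : set (\bar R)) :
  L !=set0 -> ereal_sup [set mu%:E | mu in L] = ereal_inf H ->
  (forall mu, L mu -> exists2 e : T -> R,
     e @ F --> 0 & \forall t \near F, mu - e t <= x t) ->
  (forall c, H c -> exists2 e : T -> R,
     e @ F --> 0 & \forall t \near F, ((x t)%:E <= c + (e t)%:E)%E) ->
  (x t)%:E @[t --> F] --> ereal_sup [set mu%:E | mu in L].
Proof.
move=> [mu0 Lmu0] sup_inf lower upper.
have above a : (a%:E < ereal_sup [set mu%:E | mu in L])%E ->
    \forall t \near F, a < x t.
  move=> /ereal_sup_gt[_ [mu Lmu <-]]; rewrite lte_fin -subr_gt0 => amu.
  have [e e0 mu_x] := lower mu Lmu.
  have e_small : \forall t \near F, e t < mu - a by exact: cvgr_lt e0 _ amu.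
  by apply: filterS2 mu_x e_small => t; lra.
have below b : (ereal_sup [set mu%:E | mu in L] < b%:E)%E ->
    \forall t \near F, x t < b.
  rewrite sup_inf => /ereal_inf_lt[c Hc cb]; have [e e0 x_c] := upper c Hc.
  case: c cb x_c {Hc} => [c||] // cb x_c.
    rewrite lte_fin -subr_gt0 in cb.
    have e_small : \forall t \near F, e t < b - c by exact: cvgr_lt e0 _ cb.
    by apply: filterS2 x_c e_small => t; rewrite -EFinD lee_fin; lra.
  by apply: filterS x_c => t.
have sup_ge : (mu0%:E <= ereal_sup [set mu%:E | mu in L])%E.
  by apply: ereal_sup_ubound; exists mu0.
case: (ereal_sup _) sup_ge above below => [r||] sup_ge above below.
- apply: cvg_EFin; first exact: nearW.
  apply/cvgrPdist_lt => eps eps0.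
  apply: filterS2 (above (r - eps) _) (below (r + eps) _) => [t r_x x_r||].
  + by rewrite distrC ltr_distl r_x x_r.
  + by rewrite lte_fin ltrBlDr ltrDl.
  + by rewrite lte_fin ltrDl.
- apply/cvgeyPgt => A; apply: filterS (above A (ltry A)) => t.
  by rewrite lte_fin.
- by have := lt_le_trans (ltNyr mu0) sup_ge; rewrite ltxx.
Qed.

Lemma cvg_divrn0 {R : realType} (c : R) : (fun n : nat => c / n%:R) @ \oo --> 0.
Proof.
rewrite -(mulr0 c); apply: cvgM; first exact: cvg_cst.
apply/gtr0_cvgV0; last exact: cvgr_idn.
by near=> n; rewrite ltr0n; near: n; exact: nbhs_infty_gt.
Unshelve. all: by end_near.
Qed.

Lemma cvg_left1_mulr_subr {R : realType} (c : R) :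
  (fun a : R => c * (1 - a)) @ 1^'- --> 0.
Proof.
rewrite (_ : 0 = c * (1 - 1)); last by rewrite subrr mulr0.
apply: cvg_at_left_filter; apply: cvgM; first exact: cvg_cst.
by apply: cvgB; [exact: cvg_cst|exact: cvg_id].
Qed.

Section ControlProblem.
Context {R : realType} {m : nat} {U0 : pmetricType R}.
Variables (Y : set 'rV[R]_m) (U : 'rV[R]_m -> set U0)
  (f : ('rV[R]_m * U0)%type -> 'rV[R]_m) (k : ('rV[R]_m * U0)%type -> R).

Local Notation G := (Gset Y U f).
Local Notation admissibleT := (admissibleT Y U f).
Local Notation admissible := (admissible Y U f).
Local Notation V := (V Y U f k).
Local Notation h := (h Y U f k).
Local Notation d_star := (d_star Y U f k).
Local Notation k_star := (k_star Y U f k).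

Lemma admissibleT_Y T y0 y u : Y y0 -> admissibleT T y0 y u ->
  forall t, (t <= T)%N -> Y (y t).
Proof.
move=> Yy0 [y_0 adm]; elim=> [|t IHt] tT; first by rewrite y_0.
by have [[_ Yf] ->] := adm t tT.
Qed.

Lemma admissibleT_G T y0 y u : Y y0 -> admissibleT T y0 y u ->
  forall t, (t < T)%N -> G (y t, u t).
Proof.
move=> Yy0 adm t tT; split; first exact: admissibleT_Y Yy0 adm t (ltnW tT).
by case: adm => _ /(_ t tT) [].
Qed.

Lemma admissible_admissibleT T y0 y u : admissible y0 y u -> admissibleT T y0 y u.
Proof. by case=> y_0 adm; split=> // t _; exact: adm. Qed.

Lemma admissible_G y0 y u : Y y0 -> admissible y0 y u -> forall t, G (y t, u t).
Proof.
move=> Yy0 adm t.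
exact: admissibleT_G Yy0 (admissible_admissibleT t.+1 adm) t (ltnSn t).
Qed.

Definition scons {A : Type} (a : A) (s : nat -> A) n := if n is n'.+1 then s n' else a.

Lemma admissibleT_scons T p y u : G p -> admissibleT T (f p) y u ->
  admissibleT T.+1 p.1 (scons p.1 y) (scons p.2 u).
Proof.
case: p => y0 u0 [_ A0] [y_0 adm]; split=> // -[|t] tT /=; last exact: adm.
by rewrite y_0.
Qed.

Lemma admissible_scons p y u : G p -> admissible (f p) y u ->
  admissible p.1 (scons p.1 y) (scons p.2 u).
Proof.
case: p => y0 u0 [_ A0] [y_0 adm]; split=> // -[|t] /=; last exact: adm.
by rewrite y_0.
Qed.

Lemma exists_admissible y0 : (forall y, Y y -> Aset Y U f y !=set0) -> Y y0 ->
  exists y u, admissible y0 y u.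
Proof.
move=> A_ne Yy0.
have /boolp.choice[a Aa] : forall y, exists u : U0, Y y -> Aset Y U f y u.
  move=> y; have [/A_ne[u Au]|nYy] := pselect (Y y); first by exists u.
  by exists point => /nYy.
pose y t := iter t (fun z => f (z, a z)) y0.
have Yy t : Y (y t) by elim: t => [//|t IHt]; rewrite /y iterS; exact: (Aa _ IHt).2.
by exists y, (fun t => a (y t)); split=> // t; split; [exact: Aa|rewrite /y iterS].
Qed.

Definition dual_feasible y0 mu (psi eta : 'rV[R]_m -> R) := forall p, G p ->
  0 <= k p + psi y0 - psi p.1 + eta (f p) - eta p.1 - mu /\ 0 <= psi (f p) - psi p.1.

Lemma dual_feasible_step T y0 y u mu psi eta : Y y0 ->
  dual_feasible y0 mu psi eta -> admissibleT T y0 y u ->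
  forall t, (t < T)%N -> mu + (eta (y t) - eta (y t.+1)) <= k (y t, u t).
Proof.
move=> Yy0 df adm t tT; have [_ y_S] := adm.
have psi_y0 s : (s <= T)%N -> psi y0 <= psi (y s).
  elim: s => [|s IHs] sT; first by case: adm => ->.
  have [_] := df _ (admissibleT_G Yy0 adm sT); rewrite /= -(y_S s sT).2 subr_ge0.
  exact/le_trans/IHs/ltnW.
have [] := df _ (admissibleT_G Yy0 adm tT); rewrite /= -(y_S t tT).2 => dual _.
have := psi_y0 t (ltnW tT); lra.
Qed.

Lemma fcost_dual_ge T y0 y u mu psi eta M : Y y0 -> dual_feasible y0 mu psi eta ->
  (forall z, Y z -> `|eta z| <= M) -> admissibleT T y0 y u ->
  T%:R * mu - 2 * M <= \sum_(0 <= t < T) k (y t, u t).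
Proof.
move=> Yy0 df etaM adm; apply: (sum_telescope_ge (z := fun t => eta (y t))).
  by move=> t tT; apply/etaM/(admissibleT_Y Yy0 adm).
exact: dual_feasible_step Yy0 df adm.
Qed.

Variable K : R.
Hypothesis k_bounded : forall p, G p -> `|k p| <= K.

Lemma dcost_dual_ge al y0 y u mu psi eta M : 0 <= al -> al < 1 -> Y y0 ->
  dual_feasible y0 mu psi eta -> (forall z, Y z -> `|eta z| <= M) ->
  admissible y0 y u ->
  mu / (1 - al) - 2 * M <= dsum al (fun t => k (y t, u t)).
Proof.
move=> al_ge0 al_lt1 Yy0 df etaM adm.
apply: (dsum_telescope_ge al_ge0 al_lt1 (Bx := K) (z := fun t => eta (y t))).
- by move=> t; exact/k_bounded/(admissible_G Yy0 adm).
- by move=> t; apply/etaM/(admissibleT_Y Yy0 (admissible_admissibleT t adm)).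
- move=> t; apply: (dual_feasible_step Yy0 df (admissible_admissibleT t.+1 adm)).
  exact: ltnSn.
Qed.

Lemma dual_feasible_cst y0 : dual_feasible y0 (- K) (fun=> 0) (fun=> 0).
Proof.
move=> p /k_bounded; rewrite ler_norml => /andP[kK _].
by split; [lra|rewrite subrr].
Qed.

Hypothesis A_nonempty : forall y, Y y -> Aset Y U f y !=set0.

Definition fcosts T y0 := [set c | exists y u, admissibleT T y0 y u /\
  c = \sum_(0 <= t < T) k (y t, u t)].
Definition Vsum T y0 := inf (fcosts T y0).

Lemma mulr_V T y0 : (0 < T)%N -> T%:R * V T y0 = Vsum T y0.
Proof. by move=> T0; rewrite /V mulrA divff ?mul1r // pnatr_eq0 -lt0n. Qed.

Lemma Vsum_le T y0 c : Y y0 -> fcosts T y0 c -> Vsum T y0 <= c.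
Proof.
move=> Yy0 costc; apply: ge_inf => //; exists (T%:R * - K - 2 * 0).
move=> _ [y [u [adm ->]]].
by apply: fcost_dual_ge Yy0 (dual_feasible_cst _) _ adm => z _; rewrite normr0.
Qed.

Lemma Vsum_ge T y0 a : Y y0 -> (forall c, fcosts T y0 c -> a <= c) -> a <= Vsum T y0.
Proof.
move=> Yy0; apply: lb_le_inf; have [y [u adm]] := exists_admissible A_nonempty Yy0.
exists (\sum_(0 <= t < T) k (y t, u t)), y, u.
by split=> //; exact: admissible_admissibleT.
Qed.

Lemma Vsum_DP T p : G p -> Vsum T.+1 p.1 <= k p + Vsum T (f p).
Proof.
case: p => y0 u0 Gp; have [/= Yy0 [_ Yf]] := Gp.
rewrite -lerBlDl; apply: Vsum_ge => // _ [y [u [adm ->]]]; rewrite lerBlDl.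
apply: Vsum_le => //; exists (scons y0 y), (scons u0 u).
by split; [exact: (admissibleT_scons Gp)|rewrite big_nat_recl].
Qed.

Lemma Vsum_le_succ T z : Y z -> Vsum T z <= Vsum T.+1 z + K.
Proof.
move=> Yz; rewrite -lerBlDr; apply: Vsum_ge => // _ [y [u [adm ->]]].
have admT : admissibleT T z y u.
  by case: adm => y_0 adm; split=> // t tT; apply: adm; exact: ltnW.
rewrite lerBlDr; apply: le_trans (Vsum_le Yz _) _; first by exists y, u.
rewrite big_nat_recr //= -addrA lerDl -lerBlDr sub0r.
by have := k_bounded (admissibleT_G Yz adm (ltnSn T)); rewrite ler_norml => /andP[].
Qed.

Lemma V_dual_ge T y0 mu psi eta M : Y y0 -> dual_feasible y0 mu psi eta ->
  (forall z, Y z -> `|eta z| <= M) -> (0 < T)%N ->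
  mu - 2 * M / T%:R <= V T y0.
Proof.
move=> Yy0 df etaM T0; have T0' : 0 < T%:R :> R by rewrite ltr0n.
rewrite -(ler_pM2l T0') mulr_V // mulrBr mulrCA mulfV ?gt_eqF // mulr1.
by apply: Vsum_ge => // _ [y [u [adm ->]]]; exact: fcost_dual_ge Yy0 df etaM adm.
Qed.

Lemma V_osc T p : (0 < T)%N -> G p -> V T p.1 - V T (f p) <= 2 * K / T%:R.
Proof.
case: T => // n _; case: p => y0 u0 Gp; have [_ [_ Yf]] := Gp.
rewrite ler_pdivlMr ?ltr0n // mulrBl ![_ * n.+1%:R]mulrC !mulr_V //.
have := Vsum_DP n Gp; have := Vsum_le_succ n Yf.
have := k_bounded Gp; rewrite ler_norml => /andP[_ kK] /=; lra.
Qed.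

Section Discounted.
Variable al : R.
Hypotheses (al_gt0 : 0 < al) (al_lt1 : al < 1).

Let al_ge0 : 0 <= al. Proof. exact: ltW. Qed.
Let one_sub_al_gt0 : 0 < 1 - al. Proof. by rewrite subr_gt0. Qed.

Definition dcosts y0 := [set c | exists y u, admissible y0 y u /\
  c = dsum al (fun t => k (y t, u t))].
Definition hsum y0 := inf (dcosts y0).

Lemma hE y0 : h al y0 = (1 - al) * hsum y0.
Proof. by []. Qed.

Lemma hsum_le y0 c : Y y0 -> dcosts y0 c -> hsum y0 <= c.
Proof.
move=> Yy0 costc; apply: ge_inf => //; exists (- K / (1 - al) - 2 * 0).
move=> _ [y [u [adm ->]]].
apply: dcost_dual_ge al_ge0 al_lt1 Yy0 (dual_feasible_cst _) _ adm => z _.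
by rewrite normr0.
Qed.

Lemma hsum_ge y0 a : Y y0 -> (forall c, dcosts y0 c -> a <= c) -> a <= hsum y0.
Proof.
move=> Yy0; apply: lb_le_inf; have [y [u adm]] := exists_admissible A_nonempty Yy0.
by exists (dsum al (fun t => k (y t, u t))), y, u.
Qed.

Lemma hsum_DP p : G p -> hsum p.1 <= k p + al * hsum (f p).
Proof.
case: p => y0 u0 Gp; have [/= Yy0 [_ Yf]] := Gp.
rewrite -lerBlDl -ler_pdivrMl //; apply: hsum_ge => // _ [y [u [adm ->]]].
rewrite ler_pdivrMl // lerBlDl; apply: hsum_le => //.
exists (scons y0 y), (scons u0 u); split; first exact: (admissible_scons Gp).
rewrite [RHS](dsumS al_ge0 al_lt1 (B := K)) // => t.
exact/k_bounded/(admissible_G Yy0 (admissible_scons Gp adm)).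
Qed.

Lemma h_dual_ge y0 mu psi eta M : Y y0 -> dual_feasible y0 mu psi eta ->
  (forall z, Y z -> `|eta z| <= M) -> mu - 2 * M * (1 - al) <= h al y0.
Proof.
move=> Yy0 df etaM; rewrite hE.
have -> : mu - 2 * M * (1 - al) = (1 - al) * (mu / (1 - al) - 2 * M).
  by field; rewrite gt_eqF.
rewrite ler_pM2l //; apply: hsum_ge => // _ [y [u [adm ->]]].
exact: dcost_dual_ge al_ge0 al_lt1 Yy0 df etaM adm.
Qed.

Lemma h_DP p : G p -> h al p.1 <= (1 - al) * k p + al * h al (f p).
Proof.
move=> Gp; rewrite !hE [al * _]mulrCA -mulrDr.
by apply: ler_wpM2l; [exact: ltW|exact: hsum_DP].
Qed.

Lemma h_osc p : G p -> h al p.1 - h al (f p) <= (1 - al) * (2 * K).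
Proof.
case: p => y0 u0 Gp; have [_ [_ Yf]] := Gp.
have h_fp : - K <= h al (f (y0, u0)).
  have eta0 (z : 'rV[R]_m) : Y z -> `|(fun=> 0 : R) z| <= 0 by rewrite normr0.
  by have := h_dual_ge Yf (dual_feasible_cst _) eta0; rewrite mulr0 mul0r subr0.
have := k_bounded Gp; rewrite ler_norml => /andP[_ kK].
have := ler_wpM2l (ltW one_sub_al_gt0) kK; have := ler_wpM2l (ltW one_sub_al_gt0) h_fp.
have := h_DP Gp => /=; lra.
Qed.

End Discounted.

Local Notation Sp := ('rV[R]_m * U0)%type.
Local Notation BorSp := (g_sigma_algebraType (@open Sp)).

Hypotheses (Y_closed : closed Y) (U_usc : usc_on Y U)
  (U_closed : forall y, Y y -> closed (U y)).

Lemma closed_graph : closed [set p : Sp | Y p.1 /\ U p.1 p.2].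
Proof.
rewrite -[X in closed X]setCK; apply: open_closedC; rewrite openE => -[y u] /= notUyu.
have [Yy|nYy] := pselect (Y y); last first.
  apply: filterS (_ : nbhs (y, u) (~` Y `*` [set: U0])) => [[z v] [nYz _] []//|].
  exists (~` Y, [set: U0]) => //; split; last exact: filterT.
  by apply: open_nbhs_nbhs; split; [exact: closed_openC|exact: nYy].
have /nbhs_ballP[e /= e0 ball_notU] : nbhs u (~` U y).
  by apply/open_nbhs_nbhs; split; [exact/closed_openC/U_closed|move=> ?; exact: notUyu].
have e2 : 0 < e / 2 by rewrite divr_gt0.
pose O := ~` closure (ball u (e / 2)).
have UyO : U y `<=` O.
  move=> v Uyv /(_ (ball v (e / 2)) (nbhsx_ballx _ _ e2))[w [uw vw]].
  by apply: ball_notU Uyv; rewrite (splitr e); exact: ball_triangle uw (ball_sym vw).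
have oO : open O by apply: closed_openC; exact: closed_closure.
have UO_near := U_usc Yy oO UyO.
have : nbhs (y, u) ([set z | Y z -> U z `<=` O] `*` ball u (e / 2)).
  exists ([set z | Y z -> U z `<=` O], ball u (e / 2)) => //.
  by split; [exact: UO_near|exact: nbhsx_ballx].
apply: filterS => -[z v] /= [UzO uv] [Yz /(UzO Yz)]; apply; exact: subset_closure.
Qed.

Hypothesis f_cont : continuous f.

Lemma closed_G : closed G.
Proof.
have -> : G = [set p : Sp | Y p.1 /\ U p.1 p.2] `&` f @^-1` Y.
  by apply/seteqP; split=> -[y u] /=; [move=> [? []]|move=> [[]]].
apply: closedI; first exact: closed_graph.
by apply: preimage_closed Y_closed => p _; exact: f_cont.
Qed.

Lemma measurable_G : measurable (G : set BorSp).
Proof.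
rewrite -[G]setCK; apply: measurableC; apply: sub_sigma_algebra.
exact: closed_openC closed_G.
Qed.

Definition Gcontinuous (F : Sp -> R) := forall O : set R, open O ->
  exists2 V : set Sp, open V & G `&` V = G `&` F @^-1` O.

Lemma Gcontinuous_measurable F : Gcontinuous F ->
  measurable_fun (G : set BorSp) (F : BorSp -> R).
Proof.
move=> GF; apply: (measurability _ (measurable_realfun.RGenOpens.measurableE R)).
move=> _ [_ [a [b ->] <-]].
have [V oV <-] := GF _ (@interval_open R (BRight a) (BLeft b) isT isT).
by apply: measurableI; [exact: measurable_G|exact: sub_sigma_algebra].
Qed.

Lemma continuous_Gcontinuous F : continuous F -> Gcontinuous F.
Proof. by move=> /continuousP cF O oO; exists (F @^-1` O); [exact: cF|]. Qed.

Lemma Gcontinuous_comp (g : Sp -> 'rV[R]_m) (phi : 'rV[R]_m -> R) :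
  continuous g -> (forall p, G p -> Y (g p)) -> {within Y, continuous phi} ->
  Gcontinuous (phi \o g).
Proof.
move=> /continuousP cg GY /continuousP cphi O oO.
have [V oV VY] := (open_subspaceP Y _).1 (cphi O oO).
exists (g @^-1` V); first exact: cg.
apply/seteqP; split=> p [Gp Vp]; split=> //=.
  have : (V `&` Y) (g p) by split=> //; exact: GY.
  by rewrite VY => -[].
have : (from_subspace Y phi @^-1` O `&` Y) (g p) by split=> //; exact: GY.
by rewrite -VY => -[].
Qed.

Lemma integrable_Gcontinuous (mu : {measure set BorSp -> \bar R}) F B :
  (mu G < +oo)%E -> Gcontinuous F -> (forall p, G p -> `|F p| <= B) ->
  mu.-integrable (G : set BorSp) (EFin \o F).
Proof.
move=> muG GF FB; apply: measurable_bounded_integrable => //.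
- exact: measurable_G.
- exact: Gcontinuous_measurable.
- exact: bounded_fun_le FB.
Qed.

Hypothesis Y_compact : compact Y.

Lemma integrable_comp (mu : {measure set BorSp -> \bar R}) (g : Sp -> 'rV[R]_m)
    (phi : 'rV[R]_m -> R) :
  (mu G < +oo)%E -> continuous g -> (forall p, G p -> Y (g p)) ->
  {within Y, continuous phi} -> mu.-integrable (G : set BorSp) (EFin \o (phi \o g)).
Proof.
move=> muG cg GY cphi; have [M phiM] := compact_continuous_bounded Y_compact cphi.
apply: integrable_Gcontinuous muG (Gcontinuous_comp cg GY cphi) _ => p Gp.
exact/phiM/GY.
Qed.

Lemma G_Y p : G p -> Y p.1. Proof. by case. Qed.

Lemma G_Yf p : G p -> Y (f p). Proof. by case: p => y u [_ []]. Qed.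

Lemma continuous_fst : continuous (fun p : Sp => p.1).
Proof. by move=> [y u]; exact: cvg_fst. Qed.

Lemma integrable_fst (mu : {measure set BorSp -> \bar R}) (phi : 'rV[R]_m -> R) :
  (mu G < +oo)%E -> {within Y, continuous phi} ->
  mu.-integrable (G : set BorSp) (EFin \o (phi \o fst)).
Proof. by move=> muG; exact: integrable_comp muG continuous_fst G_Y. Qed.

Lemma integrable_f (mu : {measure set BorSp -> \bar R}) (phi : 'rV[R]_m -> R) :
  (mu G < +oo)%E -> {within Y, continuous phi} ->
  mu.-integrable (G : set BorSp) (EFin \o (phi \o f)).
Proof. by move=> muG; exact: integrable_comp muG f_cont G_Yf. Qed.

Lemma integrable_cst (mu : {measure set BorSp -> \bar R}) c : (mu G < +oo)%E ->
  mu.-integrable (G : set BorSp) (EFin \o cst c).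
Proof.
move=> muG; apply: (integrable_Gcontinuous (B := `|c|) muG) => [|p _ //].
by apply: continuous_Gcontinuous; exact: cst_continuous.
Qed.

Hypothesis k_cont : continuous k.

Lemma integrable_k (mu : {measure set BorSp -> \bar R}) : (mu G < +oo)%E ->
  mu.-integrable (G : set BorSp) (EFin \o k).
Proof.
by move=> muG; exact: integrable_Gcontinuous muG (continuous_Gcontinuous k_cont) k_bounded.
Qed.

Section LPFeasible.
Variables (y0 : 'rV[R]_m) (g xi : {measure set BorSp -> \bar R}).
Hypothesis feas : LPfeasible Y U f y0 g xi.

Lemma g_G : g G = 1%E.
Proof. by case: feas => -[[gT gC] _] _; rewrite measure_setC0 //; exact: measurable_G. Qed.

Let g_G_fin : (g G < +oo)%E. Proof. by rewrite g_G ltry. Qed.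

Let xi_G_fin : (xi G < +oo)%E.
Proof. by case: feas => _ [[xiT xiC] _]; rewrite measure_setC0 //; exact: measurable_G. Qed.

Local Notation "\int_G [ mu ] F" := (\int[mu]_(p in (G : set BorSp)) F p)
  (at level 36, mu at level 0, F at level 0).

Lemma integral_k_fin : (\int[g]_(p in (G : set BorSp)) (k p)%:E)%E = (\int_G[g] k)%:E.
Proof.
by rewrite fineK //; apply: integrable_fin_num; [exact: measurable_G|exact: integrable_k].
Qed.

Lemma Rintegral_invariant (phi : 'rV[R]_m -> R) : {within Y, continuous phi} ->
  \int_G[g] (phi \o f) = \int_G[g] (phi \o fst).
Proof.
move=> cphi; apply/eqP; rewrite -subr_eq0 -RintegralB //.
- by case: feas => -[_ inv] _; rewrite /Rintegral inv.
- exact: measurable_G.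
- exact: integrable_f.
- exact: integrable_fst.
Qed.

Lemma lp_value_le (phi : 'rV[R]_m -> R) (c : R) : {within Y, continuous phi} ->
  (forall p, G p -> phi p.1 - phi (f p) <= c) ->
  phi y0 <= \int_G[g] (phi \o fst) + c * fine (xi G).
Proof.
move=> cphi osc; have mG := measurable_G.
have int_xi : xi.-integrable (G : set BorSp) (EFin \o (fun p => phi (f p) - phi p.1)).
  exact (integrableB_EFin mG (integrable_f xi_G_fin cphi) (integrable_fst xi_G_fin cphi)).
have int_g : g.-integrable (G : set BorSp) (EFin \o (fun p => phi y0 - phi p.1)).
  exact (integrableB_EFin mG (integrable_cst _ g_G_fin) (integrable_fst g_G_fin cphi)).
have lp : \int_G[g] (fun p => phi y0 - phi p.1) +
    \int_G[xi] (fun p => phi (f p) - phi p.1) = 0.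
  case: feas => _ [_ /(_ phi cphi) lp]; have := congr1 fine lp.
  by rewrite fineD //; apply: integrable_fin_num.
have xi_ge : - c * fine (xi G) <= \int_G[xi] (fun p => phi (f p) - phi p.1).
  rewrite -Rintegral_cst //; apply: le_Rintegral => //.
    exact: integrable_cst.
  by move=> p Gp; have := osc p Gp; lra.
have g_part : \int_G[g] (fun p => phi y0 - phi p.1) = phi y0 - \int_G[g] (phi \o fst).
  rewrite RintegralB //; [|exact: integrable_cst|exact: integrable_fst].
  by rewrite Rintegral_cst // g_G mulr1.
move: lp xi_ge; rewrite g_part mulNr; lra.
Qed.

Lemma Rintegral_DP_le (phi1 phi2 : 'rV[R]_m -> R) (c1 a b : R) :
  {within Y, continuous phi1} -> {within Y, continuous phi2} ->
  (forall p, G p -> c1 * phi1 p.1 <= a * k p + b * phi2 (f p)) ->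
  c1 * \int_G[g] (phi1 \o fst) <= a * \int_G[g] k + b * \int_G[g] (phi2 \o fst).
Proof.
move=> cphi1 cphi2 DP; have mG := measurable_G.
have i1 := integrable_fst g_G_fin cphi1; have i2 := integrable_f g_G_fin cphi2.
have ik := integrable_k g_G_fin.
have -> : c1 * \int_G[g] (phi1 \o fst) = \int_G[g] (fun p => c1 * phi1 p.1).
  by rewrite RintegralZl.
have -> : a * \int_G[g] k + b * \int_G[g] (phi2 \o fst) =
    \int_G[g] (fun p => a * k p + b * phi2 (f p)).
  by rewrite -Rintegral_invariant // RintegralD ?RintegralZl //; exact: integrableZl_EFin.
apply: le_Rintegral => //; first exact: integrableZl_EFin.
by apply: integrableD_EFin => //; exact: integrableZl_EFin.
Qed.

Section FiniteHorizon.
Hypothesis V_cont : forall T, (1 < T)%N -> {within Y, continuous (V T)}.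

Lemma cesaro_le T : (1 < T)%N ->
  T%:R * (\int_G[g] (V T \o fst) - \int_G[g] k) <=
  2 * (\int_G[g] (V 2 \o fst) - \int_G[g] k).
Proof.
elim: T => // -[//|n] IHn _.
case: n IHn => [_|n /(_ isT) IHn]; first exact: lexx.
have step : n.+3%:R * \int_G[g] (V n.+3 \o fst) <=
    1 * \int_G[g] k + n.+2%:R * \int_G[g] (V n.+2 \o fst).
  apply: Rintegral_DP_le; [exact: V_cont|exact: V_cont|] => p Gp.
  by rewrite mul1r !mulr_V //; exact: Vsum_DP.
apply: le_trans IHn; rewrite [n.+3%:R]mulrSr; lra.
Qed.

Lemma V_le : exists C, forall T, (1 < T)%N -> V T y0 <= \int_G[g] k + C / T%:R.
Proof.
exists (2 * (\int_G[g] (V 2 \o fst) - \int_G[g] k) + 2 * K * fine (xi G)).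
move=> T T1; have T0 : (0 < T)%N := ltnW T1; have T0' : 0 < T%:R :> R by rewrite ltr0n.
have := lp_value_le (V_cont T1) (fun p Gp => V_osc T0 Gp).
have := cesaro_le T1; rewrite mulrC -ler_pdivlMr //.
rewrite mulrDl [2 * K / _ * _]mulrAC; lra.
Qed.

End FiniteHorizon.

Lemma h_le al : 0 < al -> al < 1 -> {within Y, continuous (h al)} ->
  h al y0 <= \int_G[g] k + 2 * K * fine (xi G) * (1 - al).
Proof.
move=> al0 al1 h_cont; have al1' : 0 < 1 - al by rewrite subr_gt0.
have := lp_value_le h_cont (h_osc al0 al1).
have : \int_G[g] (h al \o fst) <= \int_G[g] k.
  have DP p : G p -> 1 * h al p.1 <= (1 - al) * k p + al * h al (f p).
    by rewrite mul1r; exact: h_DP.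
  rewrite -(ler_pM2l al1'); have := Rintegral_DP_le h_cont h_cont DP; lra.
lra.
Qed.

End LPFeasible.

Lemma dual_values_nonempty y0 : [set mu : R | exists psi eta,
  {within Y, continuous psi} /\ {within Y, continuous eta} /\
  dual_feasible y0 mu psi eta] !=set0.
Proof.
have cst_cont : {within Y, continuous (fun=> 0 : R)}.
  by apply: continuous_subspaceT => y; exact: cst_continuous.
by exists (- K), (fun=> 0), (fun=> 0); split; [|split]; [..|exact: dual_feasible_cst].
Qed.

Lemma V_cvg y0 : Y y0 -> d_star y0 = k_star y0 ->
  (forall T, (1 < T)%N -> {within Y, continuous (V T)}) ->
  (fun T : nat => (V T y0)%:E) @ \oo --> d_star y0.
Proof.
move=> Yy0 dk V_cont.
apply: (cvge_sup_inf_sandwich (dual_values_nonempty y0) dk).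
- move=> mu [psi [eta [_ [eta_cont df]]]].
  have [M etaM] := compact_continuous_bounded Y_compact eta_cont.
  exists (fun T => 2 * M / T%:R); first exact: cvg_divrn0.
  by near=> T; apply: V_dual_ge Yy0 df etaM _; near: T; exact: nbhs_infty_gt.
- move=> _ [g [xi feas] <-]; rewrite (integral_k_fin feas).
  have [C V_le_C] := V_le feas V_cont.
  exists (fun T => C / T%:R); first exact: cvg_divrn0.
  by near=> T; rewrite -EFinD lee_fin; apply: V_le_C; near: T; exact: nbhs_infty_gt.
Unshelve. all: by end_near.
Qed.

Lemma h_cvg y0 : Y y0 -> d_star y0 = k_star y0 ->
  (forall al, 0 < al < 1 -> {within Y, continuous (h al)}) ->
  (h al y0)%:E @[al --> 1^'-] --> d_star y0.
Proof.
move=> Yy0 dk h_cont.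
apply: (cvge_sup_inf_sandwich (dual_values_nonempty y0) dk).
- move=> mu [psi [eta [_ [eta_cont df]]]].
  have [M etaM] := compact_continuous_bounded Y_compact eta_cont.
  exists (fun al => 2 * M * (1 - al)); first exact: cvg_left1_mulr_subr.
  near=> al; apply: h_dual_ge Yy0 df etaM.
  - by near: al; exact: nbhs_left_gt ltr01.
  - by near: al; exact: nbhs_left_lt.
- move=> _ [g [xi feas] <-]; rewrite (integral_k_fin feas).
  exists (fun al => 2 * K * fine (xi G) * (1 - al)); first exact: cvg_left1_mulr_subr.
  near=> al; have al0 : 0 < al by near: al; exact: nbhs_left_gt ltr01.
  have al1 : al < 1 by near: al; exact: nbhs_left_lt.
  rewrite -EFinD lee_fin; apply: (h_le feas al0 al1).
  by apply: h_cont; rewrite al0 al1.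
Unshelve. all: by end_near.
Qed.

End ControlProblem.

Theorem proposition4p1 (R : realType) (m : nat) (U0 : pmetricType R)
  (Y : set 'rV[R]_m) (U : 'rV[R]_m -> set U0)
  (f : ('rV[R]_m * U0)%type -> 'rV[R]_m) (k : ('rV[R]_m * U0)%type -> R)
  (y0 : 'rV[R]_m) :
  Y !=set0 -> compact Y ->
  compact [set: U0] ->
  usc_on Y U -> (forall y, Y y -> compact (U y)) ->
  continuous f -> continuous k ->
  (forall y, Y y -> Aset Y U f y !=set0) ->
  Y y0 ->
  d_star Y U f k y0 = k_star Y U f k y0 ->
  ((forall T : nat, (1 < T)%N -> {within Y, continuous (V Y U f k T)}) ->
     (fun T : nat => (V Y U f k T y0)%:E) @ \oo --> d_star Y U f k y0)
  /\
  ((forall alpha : R, 0 < alpha < 1 -> {within Y, continuous (h Y U f k alpha)}) ->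
     (h Y U f k alpha y0)%:E @[alpha --> 1^'-] --> d_star Y U f k y0).
Proof.
move=> _ Y_compact U0_compact U_usc U_compact f_cont k_cont A_nonempty Yy0 dk.
have Y_closed := compact_closed (@norm_hausdorff _ _) Y_compact.
have U_closed y (Yy : Y y) : closed (U y).
  exact: compact_closed (@metric_hausdorff _ _) (U_compact y Yy).
have [K kK] := compact_continuous_bounded (compact_setX Y_compact U0_compact)
  (continuous_subspaceT k_cont).
have k_bounded p : Gset Y U f p -> `|k p| <= K by move=> [Yp _]; apply: kK.
split.
- exact: V_cvg k_bounded A_nonempty Y_closed U_usc U_closed f_cont Y_compact k_cont y0 Yy0 dk.
- exact: h_cvg k_bounded A_nonempty Y_closed U_usc U_closed f_cont Y_compact k_cont y0 Yy0 dk.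
Qed.
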